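(* Under the Sub-Gaussian Mixture Model described in the context, there exist universal constants $C_s,C_g,C_e>0$ such that if $s^2\ge C_s k$, then \[ \max\left\{\frac{\|\mathbf F-\mathbf F^*\|_1}{\|\mathbf F^*\|_1}:\ \eta(\mathbf F)\le\eta(\mathbf F^* ),\ \mathbf F\in\mathcal F\right\}\le C_g\exp\left[-\frac{s^2}{C_e}\right] \] with probability at least $1-\frac32 n^{-1}$.
   Context: Sub-Gaussian norm: for a real random variable $X$, $\|X\|_{\psi_2}=\inf\{t>0:\mathbb E\exp(X^2/t^2)\le 2\}$; for a random vector $\mathbf x\in\mathbb R^m$, $\|\mathbf x\|_{\psi_2}=\sup_{\|\mathbf u\|_2=1}\|\langle\mathbf x,\mathbf u\rangle\|_{\psi_2}$. Model: integers $n\ge 4$, $k\ge 2$ with $k\mid n$; unknown centers $\boldsymbol\mu_1,\dots,\boldsymbol\mu_k\in\mathbb R^d$; unknown labels $\sigma^*:[n]\to[k]$ with $|\{i:\sigma^*(i)=a\}|=n/k$ for every $a$. Observations $\mathbf h_i=\boldsymbol\mu_{\sigma^*(i)}+\mathbf g_i$, $i\in[n]$, with $\mathbf g_i$ independent sub-Gaussian random vectors, $\|\mathbf g_i\|_{\psi_2}\le\tau$. $\Delta=\min_{a\ne b}\|\boldsymbol\mu_a-\boldsymbol\mu_b\|_2$, $s=\Delta/\tau$. Oracle integer program: $\mathcal F=\{\mathbf F\in\{0,1\}^{n\times k}:\mathbf F\mathbf 1_k=\mathbf 1_n\}$; $\mathbf F^*\in\mathcal F$ with $F^*_{ja}=\mathbb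 1\{\sigma^*(j)=a\}$; $\bar{\mathbf h}_i=\boldsymbol\mu_{\sigma^*(i)}+4\mathbf g_i$; $\eta(\mathbf F)=\sum_{j}\sum_{a}\|\bar{\mathbf h}_j-\boldsymbol\mu_a\|_2^2F_{ja}$. $\|\cdot\|_1$ is the entrywise $\ell_1$ norm. *)

From HB Require Import structures.
From mathcomp Require Import all_boot all_order all_algebra.
From mathcomp Require Import all_classical all_reals all_analysis.
Set Implicit Arguments. Unset Strict Implicit. Unset Printing Implicit Defensive.
Import Order.TTheory GRing.Theory Num.Theory.
Local Open Scope classical_set_scope.
Local Open Scope ring_scope.

Section Defs.
Context {R : realType}.

Definition l2norm (m : nat) (v : 'rV[R]_m) : R :=
  Num.sqrt (\sum_(j < m) v ord0 j ^+ 2).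

Definition dotv (m : nat) (u v : 'rV[R]_m) : R := \sum_(j < m) u ord0 j * v ord0 j.

Context {dT : measure_display} {T : measurableType dT} (P : probability T R).

(* sub-Gaussian (psi_2) norm of a real random variable, as an extended real:
   inf { t > 0 : E exp(X^2/t^2) <= 2 }  (inf of the empty set is +oo) *)
Definition psi2_norm (X : T -> R) : \bar R :=
  ereal_inf [set t%:E | t in [set t : R | 0 < t /\
      (\int[P]_w (expR (X w ^+ 2 / t ^+ 2))%:E <= 2%:E)%E]].

Definition psi2_norm_vec (m : nat) (x : T -> 'rV[R]_m) : \bar R :=
  ereal_sup [set psi2_norm (fun w => dotv (x w) u) | u in [set u | l2norm u = 1]].

Definition random_vec (m : nat) (x : T -> 'rV[R]_m) : Prop :=
  forall j : 'I_m, measurable_fun setT (fun w => x w ord0 j).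

(* mutual independence of the random vectors g_0, ..., g_{n-1}, stated on the
   generating pi-system of measurable rectangles of R^m (choosing a rectangle
   equal to the whole space for an index drops it from the family) *)
Definition mutually_independent_vecs (n m : nat) (g : 'I_n -> T -> 'rV[R]_m)
  : Prop :=
  forall B : 'I_n -> 'I_m -> set R,
    (forall i j, measurable (B i j)) ->
    P (\bigcap_(i in [set: 'I_n]) [set w | forall j, B i j (g i w ord0 j)]) =
    (\prod_(i < n) P [set w | forall j, B i j (g i w ord0 j)])%E.

End Defs.

Section Model.
Context {R : realType}.

Definition Delta (k d : nat) (mu : 'I_k -> 'rV[R]_d) : R :=
  inf [set l2norm (mu ab.1 - mu ab.2) | ab in [set ab : 'I_k * 'I_k | ab.1 != ab.2]].

Definition feasible (n k : nat) (F : 'M[R]_(n, k)) : Prop :=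
  (forall j a, F j a = 0 \/ F j a = 1) /\ (forall j, \sum_(a < k) F j a = 1).

Definition Fstar (n k : nat) (sigma : 'I_n -> 'I_k) : 'M[R]_(n, k) :=
  \matrix_(j, a) (if sigma j == a then 1 else 0).

Definition l1norm (n k : nat) (F : 'M[R]_(n, k)) : R :=
  \sum_(j < n) \sum_(a < k) `|F j a|.

(* eta(F) = sum_j sum_a ||hbar_j - mu_a||^2 F_ja, hbar_j = mu_{sigma j} + 4 g_j *)
Definition eta_ip (n k d : nat) (mu : 'I_k -> 'rV[R]_d) (sigma : 'I_n -> 'I_k)
  (gw : 'I_n -> 'rV[R]_d) (F : 'M[R]_(n, k)) : R :=
  \sum_(j < n) \sum_(a < k)
     l2norm (mu (sigma j) + 4 *: gw j - mu a) ^+ 2 * F j a.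

End Model.

From HB Require Import structures.
From mathcomp Require Import all_boot all_order all_algebra Rstruct.
From mathcomp Require Import all_classical all_reals all_analysis.
From mathcomp Require Import measurable_realfun ring lra.
Set Implicit Arguments. Unset Strict Implicit. Unset Printing Implicit Defensive.
Import Order.TTheory GRing.Theory Num.Theory.
Local Open Scope classical_set_scope.
Local Open Scope ring_scope.
Section measurability.
Context {R : realType} {d : measure_display} {T : measurableType d}.

Lemma measurable_scale_indic (c : R) (A : set T) : measurable A ->
  measurable_fun setT (fun w => c * \1_A w).
Proof. by move=> mA; apply: measurable_funM => //; exact: measurable_indic. Qed.

Lemma measurable_set_le (f g : T -> R) : measurable_fun setT f ->
  measurable_fun setT g -> measurable [set w | f w <= g w].
Proof. by move=> mf mg; rewrite -[X in measurable X]setTI; exact: measurable_fun_le. Qed.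

Lemma measurable_forall (I : finType) (S : I -> set T) :
  (forall i, measurable (S i)) -> measurable [set w | forall i, S i w].
Proof.
move=> mS; have -> : [set w | forall i, S i w] = \bigcap_i S i.
  by apply/seteqP; split=> [w Sw i _|w Sw i]; exact: Sw.
by apply: fin_bigcap_measurable => //; exact: finite_finset.
Qed.

Lemma measurable_dotv m (h : T -> 'rV[R]_m) (u : 'rV[R]_m) :
  random_vec h -> measurable_fun setT (fun w => dotv (h w) u).
Proof. by move=> mh; apply: measurable_sum => j; exact: measurable_funM. Qed.

End measurability.

Section probability_facts.
Context {R : realType} {d : measure_display} {T : measurableType d}
  (P : probability T R).

Lemma probability_fineK (A : set T) : measurable A -> (fine (P A))%:E = P A.
Proof. by move=> mA; rewrite fineK // fin_num_measure. Qed.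

Lemma fine_probability_ge0 (A : set T) : 0 <= fine (P A).
Proof. exact/fine_ge0/measure_ge0. Qed.

Lemma le_fine_probability (A B : set T) : measurable A -> measurable B ->
  A `<=` B -> fine (P A) <= fine (P B).
Proof.
move=> mA mB AB; rewrite -lee_fin !probability_fineK //.
by apply: le_measure => //; rewrite inE.
Qed.

Lemma probability_setD (A B : set T) : measurable A -> measurable B ->
  B `<=` A -> P (A `\` B) = (P A - P B)%E.
Proof.
move=> mA mB BA; rewrite measureD //; first by congr (_ - P _)%E; exact: setIidr.
by rewrite (le_lt_trans (probability_le1 P mA)) ?ltry.
Qed.

Lemma fine_probability_setC (A : set T) : measurable A ->
  fine (P (~` A)) = 1 - fine (P A).
Proof. by move=> mA; rewrite probability_setC // -probability_fineK. Qed.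

Lemma fine_probability_setU_le (A B : set T) : measurable A -> measurable B ->
  fine (P (A `|` B)) <= fine (P A) + fine (P B).
Proof.
move=> mA mB; rewrite -lee_fin EFinD !probability_fineK //; last exact: measurableU.
exact: measureU2.
Qed.

Lemma integral_scale_indic (c : R) (A : set T) : 0 <= c -> measurable A ->
  (\int[P]_w (c * \1_A w)%:E = (c * fine (P A))%:E)%E.
Proof.
move=> c0 mA; under eq_integral do rewrite EFinM.
rewrite ge0_integralZl_EFin //; last by apply/measurable_EFinP; exact: measurable_indic.
by rewrite integral_indic // setIT EFinM probability_fineK.
Qed.

Lemma integral_sum_scale_indic (I : finType) (c : I -> R) (E : I -> set T) :
  (forall i, 0 <= c i) -> (forall i, measurable (E i)) ->
  (\int[P]_w (\sum_i c i * \1_(E i) w)%:E = (\sum_i c i * fine (P (E i)))%:E)%E.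
Proof.
move=> c0 mE; under eq_integral do rewrite -sumEFin.
rewrite ge0_integral_sum // => [|i|i w _].
- by rewrite -sumEFin; apply: eq_bigr => i _; exact: integral_scale_indic.
- by apply/measurable_EFinP; exact: measurable_scale_indic.
- by rewrite lee_fin mulr_ge0 // indicE ler0n.
Qed.

Lemma integral_scale_indicD_sum (I : finType) (c0 : R) (A0 : set T)
    (c : I -> R) (E : I -> set T) :
  0 <= c0 -> measurable A0 -> (forall i, 0 <= c i) -> (forall i, measurable (E i)) ->
  (\int[P]_w (c0 * \1_A0 w + \sum_i c i * \1_(E i) w)%:E =
   (c0 * fine (P A0) + \sum_i c i * fine (P (E i)))%:E)%E.
Proof.
move=> c00 mA0 c_ge0 mE; under eq_integral do rewrite EFinD.
rewrite ge0_integralD //.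
- by rewrite integral_scale_indic // integral_sum_scale_indic.
- by move=> w _; rewrite lee_fin mulr_ge0 // indicE ler0n.
- by apply/measurable_EFinP; exact: measurable_scale_indic.
- by move=> w _; rewrite lee_fin sumr_ge0 // => i _; rewrite mulr_ge0 // indicE ler0n.
- apply/measurable_EFinP; apply: measurable_sum => i.
  exact: measurable_scale_indic.
Qed.

Lemma le_integral_fin (f g : T -> R) : measurable_fun setT f ->
  measurable_fun setT g -> (forall w, 0 <= f w) -> (forall w, f w <= g w) ->
  (\int[P]_w (f w)%:E <= \int[P]_w (g w)%:E)%E.
Proof.
move=> mf mg f0 fg.
by apply: ge0_le_integral => // [w _|||w _]; rewrite ?lee_fin //; exact/measurable_EFinP.
Qed.

Lemma fine_probability_le_sum (I : finType) (A : set T) (F : I -> set T) :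
  measurable A -> (forall i, measurable (F i)) -> A `<=` \bigcup_i F i ->
  fine (P A) <= \sum_i fine (P (F i)).
Proof.
move=> mA mF AF; rewrite -lee_fin -[fine (P A)]mul1r -integral_scale_indic //.
under eq_bigr do rewrite -[fine _]mul1r.
rewrite -integral_sum_scale_indic //; apply: le_integral_fin => [||w|w].
- exact: measurable_scale_indic.
- by apply: measurable_sum => i; exact: measurable_scale_indic.
- by rewrite mul1r indicE ler0n.
have F0 i : 0 <= 1 * \1_(F i) w :> R by rewrite mul1r indicE ler0n.
rewrite mul1r indicE; have [/set_mem/AF [i _ Fiw]|_] := boolP (w \in A).
  by rewrite (bigD1 i) //= mul1r indicE mem_set // lerDl sumr_ge0.
exact: sumr_ge0.
Qed.

Lemma chebyshev_count (I : finType) (E : I -> set T) (a : R) :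
  (forall i, measurable (E i)) -> 0 < a ->
  a ^+ 2 * fine (P [set w | \sum_i fine (P (E i)) + a <= \sum_i \1_(E i) w]) <=
  \sum_i \sum_j fine (P (E i `&` E j)) - (\sum_i fine (P (E i))) ^+ 2.
Proof.
move=> mE a0; set m := \sum_i fine (P (E i)).
pose C w : R := \sum_i \1_(E i) w.
have mC : measurable_fun setT C by apply: measurable_sum => i; exact: measurable_indic.
set A := [set w | m + a <= _].
have mA : measurable A := measurable_set_le (measurable_cst _) mC.
have C2E w : C w ^+ 2 = \sum_(ij : I * I) 1 * \1_(E ij.1 `&` E ij.2) w.
  rewrite /C expr2 mulr_suml; under eq_bigr do rewrite mulr_sumr.
  rewrite pair_big.
  by apply: eq_bigr => -[i j] _; rewrite mul1r indicI.
have m0 : 0 <= m by apply: sumr_ge0 => i _; exact: fine_probability_ge0.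
pose f w := a ^+ 2 * \1_A w + \sum_i (2 * m) * \1_(E i) w.
pose g w := m ^+ 2 * \1_setT w + \sum_(ij : I * I) 1 * \1_(E ij.1 `&` E ij.2) w.
have mEE (ij : I * I) : measurable (E ij.1 `&` E ij.2) by exact: measurableI.
have mf : measurable_fun setT f.
  apply: measurable_funD; first exact: measurable_scale_indic.
  by apply: measurable_sum => i; exact: measurable_scale_indic.
have mg : measurable_fun setT g.
  apply: measurable_funD; first exact: measurable_scale_indic.
  by apply: measurable_sum => ij; exact: measurable_scale_indic.
have f0 w : 0 <= f w.
  apply: addr_ge0; [|apply: sumr_ge0 => i _];
    by rewrite mulr_ge0 ?sqr_ge0 ?mulr_ge0 // ?indicE ?ler0n.
have fg w : f w <= g w.
  rewrite /f /g -mulr_sumr -C2E indicT mulr1 -/(C w).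
  have [/set_mem Aw|nAw] := boolP (w \in A).
    have : a <= C w - m by move: Aw; rewrite /A /= -/(C w) => ?; lra.
    by rewrite indicE mem_set // mulr1 => ?; nra.
  by rewrite indicE (negbTE nAw) mulr0 add0r; have := sqr_ge0 (C w - m); nra.
have := le_integral_fin mf mg f0 fg.
rewrite !integral_scale_indicD_sum ?sqr_ge0 //; last by move=> _; rewrite mulr_ge0.
rewrite lee_fin probability_setT -mulr_sumr -/m mulr1 pair_big /=.
by rewrite (eq_bigr _ (fun ij _ => mul1r _)); lra.
Qed.

Lemma probability_ge_le_exp (f : T -> R) (c v : R) : measurable_fun setT f ->
  0 < c -> (\int[P]_w (expR (f w / c))%:E <= 2%:E)%E ->
  fine (P [set w | v <= f w]) <= 2 * expR (- (v / c)).
Proof.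
move=> mf c0 hint.
have := @chernoff _ _ _ P (mfun_Sub (mem_set mf)) c^-1 v; rewrite invr_gt0 => /(_ c0).
rewrite /mmt_gen_fun unlock /= -lee_fin probability_fineK; last first.
  exact: measurable_set_le.
move=> /le_trans; apply; rewrite EFinM mulrC lee_wpmul2r // lee_fin expR_ge0.
Qed.
End probability_facts.

Section independence.
Context {R : realType} {d : measure_display} {T : measurableType d}
  (P : probability T R).

Lemma lambda_system_independent (B : set T) : measurable B ->
  lambda_system setT [set A | measurable A /\ P (A `&` B) = (P A * P B)%E].
Proof.
move=> mB; split => //.
- by split; rewrite // setTI probability_setT mul1e.
- move=> X Y YX [mX PXB] [mY PYB]; split; first exact: measurableD.
  have -> : (X `\` Y) `&` B = (X `&` B) `\` (Y `&` B).
    by apply/seteqP; split=> w /=; tauto.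
  rewrite !probability_setD //; try exact: measurableI; last exact: setSI.
  rewrite PXB PYB -(probability_fineK P mX) -(probability_fineK P mY).
  by rewrite -(probability_fineK P mB) -!EFinM -EFinB -mulrBl.
- move=> F ndF HF; have mF i : measurable (F i) by case: (HF i).
  split; first exact: bigcupT_measurable.
  have FB : (fun n => P (F n `&` B)) @ \oo --> P ((\bigcup_n F n) `&` B).
    rewrite setI_bigcupl; apply: nondecreasing_cvg_mu => //.
    - by move=> i; exact: measurableI.
    - by apply: bigcupT_measurable => i; exact: measurableI.
    - move=> m n mn; apply/subsetPset; apply: setSI.
      by apply/subsetPset; exact: ndF.
  have FPB : (fun n => P (F n) * P B)%E @ \oo --> (P (\bigcup_n F n) * P B)%E.
    apply: cvgeM; last exact: cvg_cst.
    - by apply: mule_def_fin; apply: fin_num_measure => //; exact: bigcupT_measurable.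
    - exact: nondecreasing_cvg_mu (bigcupT_measurable _ _) _.
  have FBE : (fun n => P (F n `&` B)) = (fun n => P (F n) * P B)%E.
    by apply/funext => n; case: (HF n).
  rewrite FBE in FB; exact: cvg_unique FB FPB.
Qed.

Lemma independent_sigma (G1 G2 : set (set T)) :
  setI_closed G1 -> setI_closed G2 ->
  G1 `<=` measurable -> G2 `<=` measurable ->
  (forall A B, G1 A -> G2 B -> P (A `&` B) = (P A * P B)%E) ->
  forall A B, <<s G1 >> A -> <<s G2 >> B -> P (A `&` B) = (P A * P B)%E.
Proof.
move=> G1I G2I mG1 mG2 indep.
have mA A : <<s G1 >> A -> measurable A.
  exact: smallest_sub (@sigma_algebra_measurable _ T) mG1 A.
have indep1 B : G2 B -> <<s G1 >> `<=`
    [set A | measurable A /\ P (A `&` B) = (P A * P B)%E].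
  move=> G2B; apply: (lambda_system_subset G1I
    (lambda_system_independent (mG2 _ G2B))) => // A G1A.
  by split; [exact: mG1|exact: indep].
move=> A B sA sB; rewrite setIC muleC.
suff [] : [set B | measurable B /\ P (B `&` A) = (P B * P A)%E] B by [].
apply: (lambda_system_subset G2I (lambda_system_independent (mA _ sA))) sB => // C G2C.
by split; [exact: mG2|rewrite setIC muleC; case: (indep1 _ G2C _ sA)].
Qed.

Definition rectangles (m : nat) (h : T -> 'rV[R]_m) : set (set T) :=
  [set A | exists2 B : 'I_m -> set R, (forall j, measurable (B j)) &
     A = [set w | forall j, B j (h w ord0 j)]].

Lemma rectangles_setI_closed m (h : T -> 'rV[R]_m) : setI_closed (rectangles h).
Proof.
move=> _ _ [B1 mB1 ->] [B2 mB2 ->].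
exists (fun j => B1 j `&` B2 j); first by move=> j; exact: measurableI.
by apply/seteqP; split=> w /= => [[B1w B2w] j|Bw]; [|split=> j; case: (Bw j)].
Qed.

Lemma rectangles_measurable m (h : T -> 'rV[R]_m) :
  random_vec h -> rectangles h `<=` measurable.
Proof.
move=> mh _ [B mB ->]; apply: measurable_forall => j.
by rewrite -[X in measurable X]setTI; exact: mh.
Qed.

Lemma sigma_rectangles_measurable m (h : T -> 'rV[R]_m) :
  random_vec h -> <<s rectangles h >> `<=` measurable.
Proof.
by move=> mh; apply: smallest_sub (@sigma_algebra_measurable _ T) _; exact: rectangles_measurable.
Qed.

Lemma independent_rectangles n m (g : 'I_n -> T -> 'rV[R]_m) (i j : 'I_n) :
  mutually_independent_vecs P g -> i != j ->
  forall A B, rectangles (g i) A -> rectangles (g j) B -> P (A `&` B) = (P A * P B)%E.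
Proof.
move=> indep ij _ _ [BA mBA ->] [BB mBB ->].
pose B i' := if i' == i then BA else if i' == j then BB else fun=> setT.
have mB i' c : measurable (B i' c).
  by rewrite /B; case: ifP => _; [|case: ifP => _].
have ji : (j == i) = false by rewrite eq_sym; exact: negbTE.
have := indep B mB.
have -> : \bigcap_(i' in [set: 'I_n]) [set w | forall c, B i' c (g i' w ord0 c)] =
    [set w | forall c, BA c (g i w ord0 c)] `&` [set w | forall c, BB c (g j w ord0 c)].
  apply/seteqP; split=> w /=.
  - move=> Bw; split=> c; [move: (Bw i Logic.I c)|move: (Bw j Logic.I c)];
      by rewrite /B ?eqxx ?ji.
  - move=> [BAw BBw] i' _ c; rewrite /B.
    by case: eqVneq => [->|_]; [exact: BAw|case: eqVneq => [->|_]; [exact: BBw|]].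
move=> ->; rewrite (bigD1 i) //= (bigD1 j) ?ji //= big1 ?mule1.
  by rewrite /B eqxx ji eqxx.
move=> i' /andP[ni nj]; rewrite /B (negbTE ni) (negbTE nj).
by rewrite [X in P X](_ : _ = setT) ?probability_setT //; apply/seteqP.
Qed.

Lemma independent_sigma_rectangles n m (g : 'I_n -> T -> 'rV[R]_m) (i j : 'I_n) :
  (forall i, random_vec (g i)) -> mutually_independent_vecs P g -> i != j ->
  forall A B, <<s rectangles (g i) >> A -> <<s rectangles (g j) >> B ->
  P (A `&` B) = (P A * P B)%E.
Proof.
move=> mg indep ij; apply: independent_sigma; try exact: rectangles_setI_closed.
- exact: rectangles_measurable.
- exact: rectangles_measurable.
- exact: independent_rectangles.
Qed.

Lemma sigma_rectangles_le_sqr_dotv m (h : T -> 'rV[R]_m) (u : 'rV[R]_m) (v : R) :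
  <<s rectangles h >> [set w | v <= dotv (h w) u ^+ 2].
Proof.
pose S := g_sigma_algebraType (rectangles h).
have mh : @random_vec _ _ S _ h.
  move=> j _ Y mY; apply: sub_sigma_algebra.
  exists (fun j' => if j' == j then Y else setT).
    by move=> j'; case: ifP.
  apply/seteqP; split=> [w [_ Yw] j'|w Yw]; first by case: eqP => [->|].
  by split=> //; move: (Yw j); rewrite eqxx.
have /measurable_funM/(_ (measurable_dotv u mh)) := measurable_dotv u mh.
by move/(measurable_set_le (measurable_cst v)).
Qed.

End independence.

Section geometry.
Context {R : realType} {d : nat}.
Implicit Types (p q v : 'rV[R]_d).

Lemma sqr_l2norm v : l2norm v ^+ 2 = \sum_j v ord0 j ^+ 2.
Proof. by rewrite sqr_sqrtr //; apply: sumr_ge0 => j _; exact: sqr_ge0. Qed.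

Lemma l2normZ (c : R) v : l2norm (c *: v) = `|c| * l2norm v.
Proof.
rewrite /l2norm -sqrtr_sqr -sqrtrM ?sqr_ge0 // mulr_sumr.
by congr Num.sqrt; apply: eq_bigr => j _; rewrite mxE exprMn.
Qed.

Lemma dotv0r v : dotv v 0 = 0.
Proof. by rewrite /dotv big1 // => j _; rewrite mxE mulr0. Qed.

Definition unit_dir p q : 'rV[R]_d := (l2norm (p - q))^-1 *: (p - q).

Lemma unit_dir_normE p q : l2norm (unit_dir p q) = 1 \/ unit_dir p q = 0.
Proof.
have [pq0|pq0] := eqVneq (l2norm (p - q)) 0.
  by right; rewrite /unit_dir pq0 invr0 scale0r.
left; rewrite l2normZ ger0_norm ?mulVf // invr_ge0; exact: sqrtr_ge0.
Qed.

Lemma sqr_l2norm_gap_ge p q v (D0 : R) :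
  0 < D0 -> D0 <= l2norm (p - q) ->
  D0 ^+ 2 / 2 - 32 * dotv v (unit_dir p q) ^+ 2 <=
  l2norm (p + 4 *: v - q) ^+ 2 - l2norm (p + 4 *: v - p) ^+ 2.
Proof.
move=> D00 D0D; set D := l2norm (p - q) in D0D *; set x := dotv v _.
have Dn0 : D != 0 by apply: lt0r_neq0; exact: lt_le_trans D0D.
have -> : l2norm (p + 4 *: v - q) ^+ 2 - l2norm (p + 4 *: v - p) ^+ 2 =
    D ^+ 2 + 8 * (D * x).
  rewrite /x /dotv mulr_sumr /D !sqr_l2norm -sumrB mulr_sumr -big_split /=.
  by apply: eq_bigr => j _; rewrite !mxE; field.
have := sqr_ge0 (D + 8 * x); have : 0 <= (D - D0) * (D + D0) by apply: mulr_ge0; lra.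
nra.
Qed.

End geometry.

Section separation.
Context {R : realType} {k d : nat} (mu : 'I_k -> 'rV[R]_d).

Lemma Delta_le (a b : 'I_k) : a != b -> Delta mu <= l2norm (mu a - mu b).
Proof.
move=> ab; apply: ge_inf; last by exists (a, b).
by exists 0 => _ [[a' b'] _ <-]; exact: sqrtr_ge0.
Qed.

Lemma Delta_ge0 : (1 < k)%N -> 0 <= Delta mu.
Proof.
move=> k1; apply: lb_le_inf; last by move=> _ [[a b] _ <-]; exact: sqrtr_ge0.
by exists (l2norm (mu (Ordinal (ltnW k1)) - mu (Ordinal k1))); exists (Ordinal (ltnW k1), Ordinal k1).
Qed.

End separation.

Section misclustering.
Context {R : realType}.

Lemma le_level_count (L c x : R) (N : nat) : 0 < c -> x <= L + N%:R * c ->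
  x <= L + c * \sum_(l < N) (L + l%:R * c <= x)%R%:R.
Proof.
move=> c0; elim: N => [|N IH] xN; first by rewrite big_ord0 mulr0; lra.
rewrite big_ord_recr /=; have [xgt|xle] := boolP (L + N%:R * c <= x); last first.
  by rewrite addr0; apply: IH; apply: ltW; rewrite ltNge.
have all_l (l : 'I_N) : (L + l%:R * c <= x)%R.
  apply: le_trans xgt; rewrite lerD2l ler_pM2r // ler_nat; exact: ltnW.
rewrite (eq_bigr (fun=> 1)) => [|l _]; last by rewrite all_l.
by rewrite sumr_const card_ord -natr1 mulrC in xN *.
Qed.

Lemma feasible_Fstar n k (F : 'M[R]_(n, k)) :
  feasible F -> exists r : 'I_n -> 'I_k, F = Fstar r.
Proof.
case=> F01 F1; suff /choice [r Fr] : forall j, exists a, forall b, F j b = (a == b)%:R.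
  by exists r; apply/matrixP => j b; rewrite Fr mxE; case: eqP.
move=> j; have [[a Fa]|] := pselect (exists a, F j a = 1); last first.
  move=> /forallNP noone; move: (F1 j); rewrite big1 => [/eqP|b _].
    by rewrite eq_sym oner_eq0.
  by case: (F01 j b) => // /noone.
exists a => b; have [<-|ab] := eqVneq a b; first by rewrite Fa.
move: (F1 j); rewrite (bigD1 a) //= Fa -[X in _ = X]addr0 => /addrI.
move/psumr_eq0P => -> //; last by rewrite eq_sym.
by move=> i _; case: (F01 j i) => ->.
Qed.

Lemma eta_ip_Fstar n k d (mu : 'I_k -> 'rV[R]_d) (sigma r : 'I_n -> 'I_k)
    (G : 'I_n -> 'rV[R]_d) :
  eta_ip mu sigma G (Fstar r) = \sum_j l2norm (mu (sigma j) + 4 *: G j - mu (r j)) ^+ 2.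
Proof.
apply: eq_bigr => j _; rewrite (bigD1 (r j)) //= mxE eqxx mulr1 big1 ?addr0 //.
by move=> b rb; rewrite mxE eq_sym (negbTE rb) mulr0.
Qed.

Lemma l1norm_Fstar n k (r : 'I_n -> 'I_k) : l1norm (Fstar r : 'M[R]_(n, k)) = n%:R.
Proof.
rewrite /l1norm (eq_bigr (fun=> 1)) ?sumr_const ?card_ord // => j _.
rewrite (bigD1 (r j)) //= mxE eqxx normr1 big1 ?addr0 // => b rb.
by rewrite mxE eq_sym (negbTE rb) normr0.
Qed.

Lemma l1norm_Fstar_sub n k (r s : 'I_n -> 'I_k) :
  l1norm (Fstar r - Fstar s : 'M[R]_(n, k)) = 2 * \sum_j (r j != s j)%:R.
Proof.
rewrite /l1norm mulr_sumr; apply: eq_bigr => j _.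
under eq_bigr do rewrite !mxE.
have [<-|rs] := eqVneq (r j) (s j).
  by rewrite mulr0 big1 // => b _; rewrite subrr normr0.
rewrite (bigD1 (r j)) //= (bigD1 (s j)) /=; last by rewrite eq_sym.
rewrite big1 => [|b /andP[rb sb]]; last by rewrite eq_sym (negbTE rb) eq_sym (negbTE sb) subrr normr0.
by rewrite !eqxx (negbTE rs) eq_sym (negbTE rs) subr0 sub0r normrN normr1 addr0 mulr1.
Qed.

Lemma cost_gap_ge d (p q v : 'rV[R]_d) (D0 c : R) (N : nat) :
  0 < D0 -> 0 < c -> D0 <= l2norm (p - q) ->
  let x := dotv v (unit_dir p q) in
  x ^+ 2 <= D0 ^+ 2 / 128 + N%:R * c ->
  D0 ^+ 2 / 4 - 32 * c * \sum_(l < N) (D0 ^+ 2 / 128 + l%:R * c <= x ^+ 2)%R%:R <=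
  l2norm (p + 4 *: v - q) ^+ 2 - l2norm (p + 4 *: v - p) ^+ 2.
Proof.
move=> D00 c0 D0pq x xN.
have := le_level_count c0 xN; have := sqr_l2norm_gap_ge v D00 D0pq; rewrite -/x.
lra.
Qed.

Definition level_count n k d (N : nat) (mu : 'I_k -> 'rV[R]_d) (L c : R)
    (G : 'I_n -> 'rV[R]_d) : R :=
  \sum_j \sum_(p : 'I_k * 'I_k) \sum_(l < N)
    (L + l%:R * c <= dotv (G j) (unit_dir (mu p.1) (mu p.2)) ^+ 2)%R%:R.

Lemma misclustering_le n k d N (mu : 'I_k -> 'rV[R]_d) (sigma r : 'I_n -> 'I_k)
    (G : 'I_n -> 'rV[R]_d) (D0 c : R) :
  (0 < n)%N -> 0 < D0 -> 0 < c ->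
  (forall a b, a != b -> D0 <= l2norm (mu a - mu b)) ->
  (forall j a b, dotv (G j) (unit_dir (mu a) (mu b)) ^+ 2 <= D0 ^+ 2 / 128 + N%:R * c) ->
  eta_ip mu sigma G (Fstar r) <= eta_ip mu sigma G (Fstar sigma) ->
  l1norm (Fstar r - Fstar sigma) / l1norm (Fstar sigma : 'M[R]_(n, k)) <=
  256 * c / (n%:R * D0 ^+ 2) * level_count N mu (D0 ^+ 2 / 128) c G.
Proof.
move=> n0 D00 c0 sep bounded.
rewrite !eta_ip_Fstar l1norm_Fstar_sub l1norm_Fstar => eta_le.
pose cnt (j : 'I_n) (p : 'I_k * 'I_k) : R := \sum_(l < N)
  (D0 ^+ 2 / 128 + l%:R * c <= dotv (G j) (unit_dir (mu p.1) (mu p.2)) ^+ 2)%R%:R.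
have cnt0 j p : 0 <= cnt j p by apply: sumr_ge0 => l _; exact: ler0n.
have gap j : (r j != sigma j)%:R * (D0 ^+ 2 / 4) - 32 * c * \sum_p cnt j p <=
    l2norm (mu (sigma j) + 4 *: G j - mu (r j)) ^+ 2 -
    l2norm (mu (sigma j) + 4 *: G j - mu (sigma j)) ^+ 2.
  have S0 : 0 <= \sum_p cnt j p by exact: sumr_ge0.
  have [->|rs] /= := eqVneq (r j) (sigma j).
    by rewrite mul0r subrr sub0r oppr_le0 !mulr_ge0 // ltW.
  have sr : sigma j != r j by rewrite eq_sym.
  have := cost_gap_ge D00 c0 (sep _ _ sr) (bounded j _ _).
  have : cnt j (sigma j, r j) <= \sum_p cnt j p.
    by rewrite (bigD1 (sigma j, r j)) //= lerDl sumr_ge0.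
  rewrite /cnt /=; nra.
have := @ler_sum _ _ (index_enum _) xpredT _ _ (fun j _ => gap j); rewrite !sumrB -mulr_suml -mulr_sumr.
rewrite -/(level_count N mu (D0 ^+ 2 / 128) c G).
set M := \sum_j _; set C := level_count _ _ _ _ _ => sum_gap.
have MC : M <= 128 * c * C / D0 ^+ 2 by rewrite ler_pdivlMr ?exprn_gt0 //; lra.
have -> : 256 * c / (n%:R * D0 ^+ 2) * C = 2 / n%:R * (128 * c * C / D0 ^+ 2).
  by field; rewrite lt0r_neq0 // pnatr_eq0 -lt0n.
by rewrite mulrAC ler_wpM2l // divr_ge0.
Qed.
End misclustering.

Section sub_gaussian_tail.
Context {R : realType} {d : measure_display} {T : measurableType d}
  (P : probability T R).

Lemma psi2_norm_integral_le (X : T -> R) (tau : R) : 0 < tau ->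
  measurable_fun setT X -> (psi2_norm P X <= tau%:E)%E ->
  (\int[P]_w (expR (X w ^+ 2 / (4 * tau ^+ 2)))%:E <= 2%:E)%E.
Proof.
move=> tau0 mX psiX.
have : (psi2_norm P X < (2 * tau)%:E)%E by apply: le_lt_trans psiX _; rewrite lte_fin; lra.
move=> /ereal_inf_lt [_ [t [t0 int_t] <-]]; rewrite lte_fin => t2tau.
apply: le_trans int_t.
have mexp (c : R) : measurable_fun setT (fun w => expR (X w ^+ 2 / c)).
  by apply: measurableT_comp => //; apply: measurable_funM => //; exact: measurable_funM.
apply: le_integral_fin => // w.
rewrite ler_expR ler_wpM2l ?sqr_ge0 // lef_pV2 ?posrE ?exprn_gt0 ?mulr_gt0 //.
nra.
Qed.

Lemma sqr_dotv_tail m (x : T -> 'rV[R]_m) (u : 'rV[R]_m) (tau v : R) :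
  0 < tau -> random_vec x -> (psi2_norm_vec P x <= tau%:E)%E ->
  l2norm u = 1 \/ u = 0 ->
  fine (P [set w | v <= dotv (x w) u ^+ 2]) <= 2 * expR (- (v / (4 * tau ^+ 2))).
Proof.
move=> tau0 mx psix u1; have mxu := measurable_dotv u mx.
apply: probability_ge_le_exp; first exact: measurable_funM.
  by rewrite mulr_gt0 ?exprn_gt0.
case: u1 => [u1|->].
  apply: psi2_norm_integral_le => //; apply: le_trans psix.
  by apply: ereal_sup_ge; exists (psi2_norm P (fun w => dotv (x w) u)) => //; exists u.
under eq_integral do rewrite dotv0r expr0n mul0r expR0.
by rewrite integral_cst // mul1e (le_trans (probability_le1 _ _)) // lee_fin ler1n.
Qed.

End sub_gaussian_tail.

Section exponential_bounds.
Context {R : realType}.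

Lemma mul_expRN_le1 (y : R) : y * expR (- y) <= 1.
Proof.
rewrite -[X in _ <= X](mulfV (lt0r_neq0 (expR_gt0 y))) expRN ler_wpM2r ?invr_ge0 ?expR_ge0 //.
by apply: le_trans (expR_ge1Dx y); lra.
Qed.

Lemma sum_expR_half_le (N : nat) : \sum_(l < N) expR (- (l%:R / 2)) <= 3 :> R.
Proof.
set r : R := expR (- (1 / 2)).
have rE l : expR (- (l%:R / 2)) = r ^+ l.
  by rewrite /r -expRM_natl mulrN mul1r.
under eq_bigr do rewrite rE.
have r0 : 0 < r := expR_gt0 _.
have r23 : r <= 2 / 3.
  have : r * expR (1 / 2) = 1 by rewrite /r -expRD addNr expR0.
  have : 3 / 2 <= expR (1 / 2) :> R by apply: le_trans (expR_ge1Dx _); lra.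
  nra.
have := subrX1 r N; set S := \sum_(i < N) _ => geom.
have : 0 <= r ^+ N by exact: exprn_ge0 (ltW r0).
have : 0 <= S by apply: sumr_ge0 => i _; exact: exprn_ge0 (ltW r0).
nra.
Qed.

Lemma sqr_div_expR_le (x y : R) : 0 <= x -> x <= y -> 0 < y ->
  x ^+ 2 / y * expR (- (y / 1024)) <= 2048 * expR (- (y / 2048)).
Proof.
move=> x0 xy y0; set u := expR (- (y / 2048)).
have -> : expR (- (y / 1024)) = u * u by rewrite -expRD; congr expR; lra.
have : x ^+ 2 / y <= y by rewrite ler_pdivrMr // expr2 ler_pM.
have := mul_expRN_le1 (y / 2048); have : 0 < u := expR_gt0 _.
rewrite -/u; nra.
Qed.

Lemma misclustering_rate_le (n k : nat) (tau D : R) :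
  (0 < n)%N -> 0 < tau -> 0 < D -> k%:R <= (D / tau) ^+ 2 ->
  256 * (4 * tau ^+ 2) / (n%:R * D ^+ 2) *
    (11 * n%:R * k%:R ^+ 2 * expR (- (D ^+ 2 / 128 / (2 * (4 * tau ^+ 2))))) <=
  11264 * 2048 * expR (- ((D / tau) ^+ 2 / 2048)).
Proof.
move=> n0 tau0 D0; set s := D / tau => ks.
have s0 : 0 < s ^+ 2 by rewrite exprn_gt0 // divr_gt0.
have -> : D ^+ 2 / 128 / (2 * (4 * tau ^+ 2)) = s ^+ 2 / 1024.
  by rewrite /s; field; rewrite lt0r_neq0.
have -> : forall e, 256 * (4 * tau ^+ 2) / (n%:R * D ^+ 2) * (11 * n%:R * k%:R ^+ 2 * e)
    = 11264 * (k%:R ^+ 2 / s ^+ 2 * e).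
  by move=> e; rewrite /s; field; rewrite !lt0r_neq0 ?ltr0n.
have := sqr_div_expR_le (ler0n _ k) ks s0.
set X := _ * expR _; set Y := expR _; lra.
Qed.

End exponential_bounds.

Section block_sums.
Context {R : realType}.

Lemma sum_pair (I J : finType) (F : I * J -> R) :
  \sum_x F x = \sum_i \sum_j F (i, j).
Proof. by rewrite pair_big; apply: eq_bigr => -[]. Qed.

Lemma sum_sqr (I : finType) (F : I -> R) :
  (\sum_i F i) ^+ 2 = \sum_i \sum_j F i * F j.
Proof. by rewrite expr2 mulr_suml; apply: eq_bigr => i _; rewrite mulr_sumr. Qed.

Lemma double_sum_sub_sqr_le_blocks (I J : finType) (p : I * J -> R)
    (q : I * J -> I * J -> R) :
  (forall x, 0 <= p x) -> (forall x y, x.1 != y.1 -> q x y = p x * p y) ->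
  \sum_x \sum_y q x y - (\sum_x p x) ^+ 2 <= \sum_i \sum_j \sum_j' q (i, j) (i, j').
Proof.
move=> p0 qE; rewrite sum_sqr -sumrB sum_pair; apply: ler_sum => i _.
apply: ler_sum => j _; rewrite -sumrB sum_pair (bigD1 i) //= [X in _ + X]big1 ?addr0.
  by apply: ler_sum => j' _; rewrite lerBlDr lerDl mulr_ge0.
by move=> i' i'i; apply: big1 => j' _; rewrite qE ?subrr // eq_sym.
Qed.

End block_sums.

Section good_event.
Context {R : realType} {dT : measure_display} {T : measurableType dT}
  (P : probability T R).
Variables (n k d : nat) (mu : 'I_k -> 'rV[R]_d) (g : 'I_n -> T -> 'rV[R]_d).
Variables (tau L : R).
Hypotheses (n0 : (0 < n)%N) (k0 : (0 < k)%N) (tau0 : 0 < tau) (L0 : 0 <= L).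
Hypotheses (mg : forall i, random_vec (g i)) (indep : mutually_independent_vecs P g).
Hypothesis psig : forall i, (psi2_norm_vec P (g i) <= tau%:E)%E.

Let c := 4 * tau ^+ 2.
Let N := (4 * (n * n) * (k * k))%N.
Let eps := expR (- (L / (2 * c))).
Let X j (p : 'I_k * 'I_k) w := dotv (g j w) (unit_dir (mu p.1) (mu p.2)).

Let c0 : 0 < c. Proof. by rewrite mulr_gt0 ?exprn_gt0. Qed.

Let measurable_X j p : measurable_fun setT (X j p).
Proof. exact: measurable_dotv. Qed.

Let sqr_X_tail j p v : fine (P [set w | v <= X j p w ^+ 2]) <= 2 * expR (- (v / c)).
Proof. by apply: sqr_dotv_tail => //; exact: unit_dir_normE. Qed.

Definition level_event (x : 'I_n * (('I_k * 'I_k) * 'I_N)) : set T :=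
  [set w | L + x.2.2%:R * c <= X x.1 x.2.1 w ^+ 2].

Lemma sigma_level_event x : <<s rectangles (g x.1) >> (level_event x).
Proof. exact: sigma_rectangles_le_sqr_dotv. Qed.

Lemma measurable_level_event x : measurable (level_event x).
Proof. exact: sigma_rectangles_measurable (mg x.1) _ (@sigma_level_event x). Qed.

Lemma level_event_le x :
  fine (P (level_event x)) <= 2 * eps ^+ 2 * expR (- x.2.2%:R).
Proof.
apply: le_trans (sqr_X_tail _ _ _) _; rewrite -mulrA ler_pM2l // -expRM_natl -expRD.
by rewrite ler_expR le_eqVlt /c; apply/predU1l; field; rewrite lt0r_neq0.
Qed.

Let weight (q : ('I_k * 'I_k) * 'I_N) : R := expR (- (q.2%:R / 2)).

Let sum_weight_le : \sum_q weight q <= 3 * k%:R ^+ 2.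
Proof.
rewrite sum_pair; apply: le_trans (ler_sum _ (fun p _ => sum_expR_half_le N)) _.
by rewrite sumr_const card_prod card_ord [in leRHS]expr2 -natrM mulr_natr.
Qed.

Lemma level_eventI_le x y :
  fine (P (level_event x `&` level_event y)) <= 2 * eps ^+ 2 * (weight x.2 * weight y.2).
Proof.
wlog xy : x y / (x.2.2 <= y.2.2)%N.
  move=> wlog; have [/wlog//|/ltnW/wlog] := leqP x.2.2 y.2.2.
  by rewrite setIC [_ * weight _]mulrC.
have mE := measurable_level_event.
have mEI := measurableI _ _ (mE x) (mE y).
apply: le_trans (le_fine_probability P mEI (mE y) (@subIsetr _ _ _)) _.
apply: le_trans (level_event_le y) _; rewrite ler_wpM2l ?mulr_ge0 ?expR_ge0 //.
rewrite -expRD ler_expR; have : x.2.2%:R <= y.2.2%:R :> R by rewrite ler_nat.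
lra.
Qed.

Definition mean_count := \sum_x fine (P (level_event x)).

Lemma mean_count_le : mean_count <= 6 * n%:R * k%:R ^+ 2 * eps ^+ 2.
Proof.
have coef0 : 0 <= 2 * eps ^+ 2 by rewrite ?mulr_ge0 ?expR_ge0.
have le_weight x : fine (P (level_event x)) <= 2 * eps ^+ 2 * weight x.2.
  apply: le_trans (level_event_le x) _; rewrite ler_wpM2l // ler_expR.
  have : 0 <= x.2.2%:R :> R by exact: ler0n.
  lra.
apply: le_trans (ler_sum _ (fun x _ => le_weight x)) _.
rewrite sum_pair (eq_bigr (fun=> 2 * eps ^+ 2 * \sum_q weight q)) => [|j _]; last first.
  by rewrite mulr_sumr.
rewrite sumr_const card_ord -mulr_natl; have := sum_weight_le.
have : 0 <= n%:R * eps ^+ 2 by rewrite ?mulr_ge0 ?expR_ge0.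
nra.
Qed.


Lemma variance_count_le :
  \sum_x \sum_y fine (P (level_event x `&` level_event y)) - mean_count ^+ 2 <=
  18 * n%:R * k%:R ^+ 4 * eps ^+ 2.
Proof.
have mE := measurable_level_event.
apply: le_trans (double_sum_sub_sqr_le_blocks _ _) _ => [x|x y xy|].
- exact: fine_probability_ge0.
- rewrite (independent_sigma_rectangles mg indep xy) ?fineM //;
    [exact: fin_num_measure|exact: fin_num_measure|exact: sigma_level_event|exact: sigma_level_event].
have block (j : 'I_n) : \sum_q \sum_q' fine (P (level_event (j, q) `&` level_event (j, q')))
    <= 2 * eps ^+ 2 * (\sum_q weight q) ^+ 2.
  rewrite sum_sqr mulr_sumr; apply: ler_sum => q _; rewrite mulr_sumr.
  by apply: ler_sum => q' _; exact: (level_eventI_le (j, q) (j, q')).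
apply: le_trans (ler_sum _ (fun j _ => block j)) _.
rewrite sumr_const card_ord -mulr_natl.
have : (\sum_q weight q) ^+ 2 <= 9 * k%:R ^+ 4.
  have := sum_weight_le; have : 0 <= \sum_q weight q.
    by apply: sumr_ge0 => q _; exact: expR_ge0.
  nra.
have : 0 <= n%:R * eps ^+ 2 by rewrite ?mulr_ge0 ?expR_ge0.
nra.
Qed.

Definition count_large : set T :=
  [set w | mean_count + 5 * n%:R * k%:R ^+ 2 * eps <= \sum_x \1_(level_event x) w].

Lemma count_large_le : fine (P count_large) <= n%:R^-1.
Proof.
have nR : 0 < n%:R :> R by rewrite ltr0n.
have K0 : 0 < n%:R * k%:R ^+ 4 * eps ^+ 2.
  by rewrite !mulr_gt0 ?exprn_gt0 ?ltr0n ?expR_gt0.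
have a0 : 0 < 5 * n%:R * k%:R ^+ 2 * eps.
  by rewrite !mulr_gt0 ?exprn_gt0 ?ltr0n ?expR_gt0.
have := le_trans (chebyshev_count P measurable_level_event a0) variance_count_le.
rewrite -/mean_count -/count_large; set p := fine _ => cheb.
rewrite -[_^-1]mul1r ler_pdivlMr //.
have : 25 * (p * n%:R) * (n%:R * k%:R ^+ 4 * eps ^+ 2) <=
    18 * (n%:R * k%:R ^+ 4 * eps ^+ 2) by move: cheb; congr (_ <= _); ring.
rewrite ler_pM2r //; lra.
Qed.

Definition bounded_event : set T :=
  [set w | forall j p, X j p w ^+ 2 <= L + N%:R * c].

Lemma measurable_bounded_event : measurable bounded_event.
Proof.
apply: measurable_forall => j; apply: measurable_forall => p.
by apply: measurable_set_le => //; exact: measurable_funM.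
Qed.

Lemma unbounded_le : fine (P (~` bounded_event)) <= (2 * n%:R)^-1.
Proof.
pose E (x : 'I_n * ('I_k * 'I_k)) := [set w | L + N%:R * c <= X x.1 x.2 w ^+ 2].
have mE x : measurable (E x).
  by apply: measurable_set_le => //; exact: measurable_funM.
have tail x : fine (P (E x)) <= 2 * expR (- N%:R).
  apply: le_trans (sqr_X_tail _ _ _) _; rewrite ler_pM2l // ler_expR lerN2.
  by rewrite mulrDl mulfK ?lt0r_neq0 // lerDr divr_ge0 // ltW.
apply: le_trans (fine_probability_le_sum P (measurableC measurable_bounded_event) mE _) _.
  move=> w /existsNP [j /existsNP [p /negP]]; rewrite -ltNge => /ltW Ejp.
  by exists (j, p).
apply: le_trans (ler_sum _ (fun x _ => tail x)) _.
rewrite sumr_const -(mulr_natl (2 * expR (- N%:R))) !card_prod !card_ord.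
rewrite -[_^-1]mul1r ler_pdivlMr ?mulr_gt0 ?ltr0n //.
have := mul_expRN_le1 (N%:R : R); rewrite /N !natrM; lra.
Qed.

Definition good_event : set T := bounded_event `&` ~` count_large.

Lemma measurable_count_large : measurable count_large.
Proof.
apply: measurable_set_le => //; apply: measurable_sum => x.
exact/measurable_indic/measurable_level_event.
Qed.

Lemma measurable_good_event : measurable good_event.
Proof.
by apply: measurableI; [exact: measurable_bounded_event|exact/measurableC/measurable_count_large].
Qed.

Lemma probability_good_event : 1 - 3 / 2 * n%:R^-1 <= fine (P good_event).
Proof.
have := fine_probability_setU_le P (measurableC measurable_bounded_event) measurable_count_large.
have -> : ~` bounded_event `|` count_large = ~` good_event by rewrite setCI setCK.
rewrite fine_probability_setC; last exact: measurable_good_event.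
have := unbounded_le; have := count_large_le; rewrite invfM.
lra.
Qed.

Lemma level_count_good_event w : good_event w ->
  level_count N mu L c (fun j => g j w) <= 11 * n%:R * k%:R ^+ 2 * eps.
Proof.
move=> [_ /negP]; rewrite -ltNge => small.
have lcE : level_count N mu L c (fun j => g j w) = \sum_x \1_(level_event x) w.
  rewrite sum_pair; apply: eq_bigr => j _; rewrite sum_pair; apply: eq_bigr => p _.
  apply: eq_bigr => l _; rewrite indicE; congr ((nat_of_bool _)%:R).
  by apply/idP/idP => [?|/set_mem //]; exact: mem_set.
rewrite lcE; apply: (le_trans (ltW small)); have := mean_count_le.
have : eps <= 1 by rewrite -expR0 ler_expR oppr_le0 divr_ge0 // ltW // mulr_gt0.
have : 0 <= n%:R * k%:R ^+ 2 * eps by rewrite ?mulr_ge0 ?expR_ge0.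
nra.
Qed.

End good_event.

Theorem theorem2 :
  exists Cs Cg Ce : Rdefinitions.R, 0 < Cs /\ 0 < Cg /\ 0 < Ce /\
  forall (n k d : nat) (mu : 'I_k -> 'rV[Rdefinitions.R]_d)
    (sigma : 'I_n -> 'I_k) (tau : Rdefinitions.R)
    (dT : measure_display) (T : measurableType dT)
    (P : probability T Rdefinitions.R) (g : 'I_n -> T -> 'rV[Rdefinitions.R]_d),
  (4 <= n)%N -> (2 <= k)%N -> (k %| n)%N ->
  (forall a : 'I_k, #|[set i | sigma i == a]| = (n %/ k)%N) ->
  0 < tau ->
  (forall i, random_vec (g i)) ->
  mutually_independent_vecs P g ->
  (forall i, (psi2_norm_vec P (g i) <= tau%:E)%E) ->
  let s := Delta mu / tau in
  Cs * k%:R <= s ^+ 2 ->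
  exists A : set T, measurable A /\
    (A `<=` [set w | forall F : 'M[Rdefinitions.R]_(n, k), feasible F ->
        eta_ip mu sigma (fun i => g i w) F <= eta_ip mu sigma (fun i => g i w) (Fstar sigma) ->
        l1norm (F - Fstar sigma) / l1norm (Fstar sigma : 'M[Rdefinitions.R]_(n, k))
          <= Cg * expR (- (s ^+ 2 / Ce))]) /\
    (1 - (3 / 2) * n%:R^-1 <= fine (P A)).
Proof.
exists 1, (11264 * 2048), 2048; split; [lra|split; [lra|split; [lra|]]].
move=> n k d mu sigma tau dT T P g n4 k2 _ _ tau0 mg indep psig s.
rewrite mul1r => ks.
have n0 : (0 < n)%N by apply: leq_trans n4.
have k0 : (0 < k)%N by apply: ltnW.
have s0 : 0 < s ^+ 2 by apply: lt_le_trans ks; rewrite ltr0n.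
have D0 : 0 < Delta mu.
  rewrite lt0r Delta_ge0 // andbT; apply: contraTneq s0 => D0.
  by rewrite /s D0 mul0r expr0n ltxx.
pose L := Delta mu ^+ 2 / 128.
have L0 : 0 <= L by rewrite divr_ge0 ?sqr_ge0.
exists (good_event P mu g tau L); split; first exact: measurable_good_event.
split; last exact: probability_good_event.
move=> w good F /feasible_Fstar [r ->] eta_le.
have c0 : 0 < 4 * tau ^+ 2 by rewrite mulr_gt0 ?exprn_gt0.
apply: le_trans (misclustering_le n0 D0 c0 (@Delta_le _ _ _ mu) (fun j a b => good.1 j (a, b)) eta_le) _.
apply: le_trans (ler_wpM2l _ (level_count_good_event tau0 L0 mg psig good)) _.
  by apply/ltW; rewrite divr_gt0 ?mulr_gt0 ?exprn_gt0 ?ltr0n.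
exact: misclustering_rate_le.
Qed.
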